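(* Let $X_1,\dots,X_n$ be mild $E\mathcal M$-simplicial sets. Then the natural map $\Phi\colon E\mathrm{Inj}(n\times\omega,\omega)\times_{E\mathcal M^n}X_1\times\dots\times X_n\to X_1\times\dots\times X_n$ has image exactly the unbiased box product $X_1\boxtimes\dots\boxtimes X_n$ and is an isomorphism onto it.
   Context: $\omega=\{1,2,3,\dots\}$, $\mathcal M$ the monoid of injections $\omega\to\omega$; for $A\subset\omega$, $\mathcal M_A$ is the submonoid of injections fixing $A$ elementwise; $A$ is co-infinite if $\omega\setminus A$ is infinite. $E\mathcal M$ is the simplicial monoid with $(E\mathcal M)_n=\mathcal M^{1+n}$, pointwise multiplication, structure maps by precomposition in $\{0,\dots,n\}$. For an $E\mathcal M$-simplicial set $X$, $x\in X_n$ is $k$-supported on $A$ ($0\le k\le n$) if $i_k(u).x=x$ for all $u\in\mathcal M_A$, with $i_k\colon\mathcal M\to\mathcal M^{1+n}$ the inclusion of the $(1+k)$-th factor. $X$ is mild if each simplex $x\in X_n$ is, for each $k$, $k$-supported on some co-infinite set. The unbiased box product $X_1\boxtimes\dots\boxtimes X_n\subset X_1\times\dots\times X_n$ consists in degree $m$ of those $(x_1,\dots,x_n)$ such that for each $0\le k\le m$ there are pairwise disjoint $A_k^{(1)},\dots,A_k^{(n)}\subset\omega$ with $\bigcup_iA_k^{(i)}$ co-infinite and $x_i$ $k$-supported on $A_k^{(i)}$. $E\mathrm{Inj}(n\times\omega,\omega)$ has $m$-simplices the tuples $(f_0,\dots,f_m)$ of injections $n\times\omega\to\omega$. The quotient $E\mathrm{Inj}(n\times\omega,\omega)\times_{E\mathcal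 M^n}X_1\times\dots\times X_n$ of $E\mathrm{Inj}(n\times\omega,\omega)\times X_1\times\dots\times X_n$ is by the equivalence relation generated on $m$-simplices by $(f_0,\dots,f_m;u_1.x_1,\dots,u_n.x_n)\sim(f_0\circ(u_1^{(0)}\amalg\dots\amalg u_n^{(0)}),\dots,f_m\circ(u_1^{(m)}\amalg\dots\amalg u_n^{(m)});x_1,\dots,x_n)$ for $u_i=(u_i^{(0)},\dots,u_i^{(m)})\in(E\mathcal M)_m$; $E\mathcal M$ acts by postcomposition. $\Phi[f_0,\dots,f_m;x_1,\dots,x_n]=((f_0\iota_1,\dots,f_m\iota_1).x_1,\dots,(f_0\iota_n,\dots,f_m\iota_n).x_n)$ with $\iota_j(t)=(j,t)$. *)

From Stdlib Require Import Relations.Relation_Operators.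
From mathcomp Require Import all_boot.
Set Implicit Arguments. Unset Strict Implicit. Unset Printing Implicit Defensive.

(* omega is modelled by nat (a relabelling of {1,2,3,...}). *)

Record Minj := MInj { mfun :> nat -> nat ; minj : injective mfun }.

Definition mone : Minj := @MInj id (@inj_id nat).

Definition mmul (u v : Minj) : Minj :=
  @MInj (mfun u \o mfun v) (inj_comp (@minj u) (@minj v)).

Record dmor (m n : nat) := DMor {
  dfun :> 'I_m.+1 -> 'I_n.+1 ;
  dmono : [forall i : 'I_m.+1, forall j : 'I_m.+1, (i <= j) ==> (dfun i <= dfun j)] }.

Lemma did_mono n : [forall i : 'I_n.+1, forall j : 'I_n.+1, (i <= j) ==> (id i <= id j)].
Proof. by apply/forallP => i; apply/forallP => j; apply/implyP. Qed.

Definition did n : dmor n n := DMor (@did_mono n).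

Lemma dcomp_mono m n p (b : dmor n p) (a : dmor m n) :
  [forall i : 'I_m.+1, forall j : 'I_m.+1, (i <= j) ==> ((b \o a) i <= (b \o a) j)].
Proof.
apply/forallP => i; apply/forallP => j; apply/implyP => hij /=.
have /forallP/(_ i)/forallP/(_ j)/implyP ha := dmono a.
have /forallP/(_ (a i))/forallP/(_ (a j))/implyP hb := dmono b.
exact: hb (ha hij).
Qed.

Definition dcomp m n p (b : dmor n p) (a : dmor m n) : dmor m p := DMor (@dcomp_mono m n p b a).

(** E M-simplicial sets: simplicial sets X with, in degree n, an action of
    (EM)_n = M^{1+n} (pointwise multiplication), compatible with the
    structure maps ((EM)(a) is precomposition with a). *)
Record EMsSet := {
  obj :> nat -> Type ;
  smap : forall m n, dmor m n -> obj n -> obj m ;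
  smap_id : forall n (x : obj n), smap (did n) x = x ;
  smap_comp : forall m n p (b : dmor n p) (a : dmor m n) (x : obj p),
      smap (dcomp b a) x = smap a (smap b x) ;
  act : forall n, ('I_n.+1 -> Minj) -> obj n -> obj n ;
  act_one : forall n (x : obj n), act (fun _ => mone) x = x ;
  act_mul : forall n (u v : 'I_n.+1 -> Minj) (x : obj n),
      act (fun k => mmul (u k) (v k)) x = act u (act v x) ;
  act_smap : forall m n (a : dmor m n) (u : 'I_n.+1 -> Minj) (x : obj n),
      smap a (act u x) = act (fun k => u (a k)) (smap a x) }.

Definition incl n (k : 'I_n.+1) (u : Minj) : 'I_n.+1 -> Minj :=
  fun j => if j == k then u else mone.

Definition supported (X : EMsSet) n (x : X n) (k : 'I_n.+1) (A : nat -> Prop) :=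
  forall u : Minj, (forall a, A a -> u a = a) -> @act X _ (incl k u) x = x.

Definition coinfinite (A : nat -> Prop) := forall N, exists a, N <= a /\ ~ A a.

Definition mild (X : EMsSet) :=
  forall n (x : X n) (k : 'I_n.+1), exists A, coinfinite A /\ supported x k A.

Definition inbox r (X : 'I_r -> EMsSet) m (x : forall i, X i m) :=
  forall k : 'I_m.+1, exists A : 'I_r -> nat -> Prop,
    (forall i j a, i <> j -> A i a -> A j a -> False) /\
    coinfinite (fun a => exists i, A i a) /\
    (forall i, supported (x i) k (A i)).

Record Ninj r := NInj { nfun :> 'I_r * nat -> nat ; ninj : injective nfun }.

Lemma restr_inj r (f : Ninj r) (j : 'I_r) : injective (fun t => f (j, t)).
Proof. by move=> s t /(@ninj _ f) [->]. Qed.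

Definition restr r (f : Ninj r) (j : 'I_r) : Minj := MInj (@restr_inj r f j).

Lemma ncomp_inj r (f : Ninj r) (u : 'I_r -> Minj) :
  injective (fun p : 'I_r * nat => f (p.1, u p.1 p.2)).
Proof.
move=> [i s] [j t] /(@ninj _ f) /= [ei]; subst j => /(@minj (u i)) ->; done.
Qed.

Definition ncomp r (f : Ninj r) (u : 'I_r -> Minj) : Ninj r := NInj (@ncomp_inj r f u).

(** m-simplices of E Inj(r x omega, omega) x X_1 x ... x X_r *)
Definition dom r (X : 'I_r -> EMsSet) m : Type :=
  (('I_m.+1 -> Ninj r) * (forall i : 'I_r, X i m))%type.

(** generating relation:
   (f; u_1.x_1, ..., u_r.x_r) ~ (f o (u_1 + ... + u_r); x_1, ..., x_r) *)
Definition genrel r (X : 'I_r -> EMsSet) m (a b : dom X m) : Prop :=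
  exists (F : 'I_m.+1 -> Ninj r) (u : 'I_r -> 'I_m.+1 -> Minj)
         (x : forall i : 'I_r, X i m),
    a = (F, fun i => @act (X i) _ (u i) (x i)) /\
    b = (fun k => ncomp (F k) (fun i => u i k), x).

Definition quotrel r (X : 'I_r -> EMsSet) m : dom X m -> dom X m -> Prop :=
  clos_refl_sym_trans (dom X m) (@genrel r X m).

Definition Phi r (X : 'I_r -> EMsSet) m (a : dom X m) : forall i : 'I_r, X i m :=
  fun i => @act (X i) _ (fun k => restr (a.1 k) i) (a.2 i).

(* The key fact: if x is k-supported on a co-infinite set B, then i_k(a).x depends only
   on a|B, because a|B extends to a bijection c of omega through which every b agreeing
   with a on B factors by an injection fixing B.  Consequently Phi[f; x] is supported on
   the disjoint images f_k(i, B_ik), whose union is co-infinite, so it lies in the box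
   product; conversely, an injection that is the identity on given disjoint supports of
   y and takes fresh values elsewhere sends (f; y) to y.  For injectivity, (f; x) and
   (f'; x) are identified whenever f and f' agree on supports of x: thinned off the
   supports so that their remaining values are all distinct, both factor through a
   single interleaved injection.  This identifies every representative of y with some
   (K; y), K the identity on supports of y, and two such are joined through an
   injection that is the identity where the two families of supports meet. *)

From Stdlib Require Import Relations.Relation_Operators.
From mathcomp Require Import all_boot boolp classical_sets functions cardinality.

Set Implicit Arguments. Unset Strict Implicit. Unset Printing Implicit Defensive.
Local Open Scope classical_set_scope.

Lemma minj_ext (u v : Minj) : u =1 v -> u = v.
Proof.
case: u v => f f_inj [g g_inj] /= /funext fg; subst g.
by rewrite (Prop_irrelevance f_inj g_inj).
Qed.

Lemma ninj_ext r (F G : Ninj r) : F =1 G -> F = G.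
Proof.
case: F G => f f_inj [g g_inj] /= /funext fg; subst g.
by rewrite (Prop_irrelevance f_inj g_inj).
Qed.

Lemma act_ext (Y : EMsSet) n (u v : 'I_n.+1 -> Minj) (x : Y n) :
  (forall j, u j =1 v j) -> act u x = act v x.
Proof. by move=> uv; congr act; apply/funext => j; apply: minj_ext. Qed.

Lemma patch_inj (T U : Type) (A : set T) (f d : T -> U) :
  {in A &, injective f} -> {in ~` A &, injective d} ->
  (forall p q, A p -> ~ A q -> f p <> d q) -> injective (patch d A f).
Proof.
move=> f_inj d_inj fd p q; rewrite /patch.
have notA z : z \notin A -> (~` A) z by move=> /negP zA /mem_set.
case: ifPn => Ap; case: ifPn => Aq; first exact: f_inj.
- by move=> /fd; case=> //; [exact: set_mem | exact: notA].
- by move=> /esym /fd; case=> //; [exact: set_mem | exact: notA].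
- by apply: d_inj; apply: mem_set; exact: notA.
Qed.

Lemma patch_id_inj (A : set nat) (e : nat -> nat) :
  injective e -> (forall t, ~ A (e t)) -> injective (patch e A id).
Proof.
move=> e_inj eA; apply: patch_inj => [y z _ _ //|y z _ _|y z Ay _ yz]; first exact: e_inj.
by apply: (eA z); rewrite -yz.
Qed.

Lemma interleave_inj (T : Type) (f g : T * nat -> nat) :
  injective f -> injective g -> (forall p q, f p <> g q) ->
  injective (fun p : T * nat => if odd p.2 then g (p.1, p.2./2) else f (p.1, p.2./2)).
Proof.
move=> f_inj g_inj fg [i s] [j t] /= e.
rewrite -(odd_double_half s) -(odd_double_half t); move: e.
by case: (odd s); case: (odd t);
  [move=> /g_inj[-> ->] | move=> /esym/fg | move=> /fg | move=> /f_inj[-> ->]].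
Qed.

Lemma infinite_natP (A : set nat) :
  infinite_set A <-> forall N, exists a, N <= a /\ A a.
Proof.
split=> [A_inf N|A_unb /finite_seqP[s As]].
  apply: contrapT => noA; apply: A_inf.
  apply: (sub_finite_set _ (finite_II N)) => a Aa /=.
  by rewrite ltnNge; apply/negP => Na; apply: noA; exists a.
have [a [+ /[!As]/= sa]] := A_unb (\max_(x <- s) x).+1.
by rewrite ltnNge (bigmaxn_sup_seq _ sa).
Qed.

Lemma coinfiniteP (B : set nat) : coinfinite B <-> infinite_set (~` B).
Proof. exact: iff_sym (infinite_natP _). Qed.

Lemma infinite_image (f : nat -> nat) (A : set nat) :
  injective f -> infinite_set A -> infinite_set (f @` A).
Proof. by move=> f_inj; rewrite (eq_finite_set (inj_card_eq (in2W f_inj))). Qed.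

Lemma infinite_nat_bij (A B : set nat) :
  infinite_set A -> infinite_set B -> exists g : nat -> nat, set_bij A B g.
Proof.
move=> A_inf B_inf; have /pcard_eqP[g] : (A #= B)%card.
  apply: card_eq_trans (eq_card_nat (countableP _) A_inf) _.
  exact/card_esym/(eq_card_nat (countableP _) B_inf).
by exists g; split; [exact: set_bij_homo | exact: inj | exact: surj].
Qed.

Lemma distinct_representatives_nat (A : nat -> set nat) : (forall n, infinite_set (A n)) ->
  exists s : nat -> nat, injective s /\ forall n, A n (s n).
Proof.
move=> A_inf; have next n := choice ((infinite_natP (A n)).1 (A_inf n)).
pose s := fix s n := projT1 (next n) (if n is n'.+1 then (s n').+1 else 0).
have sA n : A n (s n).
  by case: n => [|n]; [case: (projT2 (next 0) 0) | case: (projT2 (next n.+1) (s n).+1)].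
have s_lt n : s n < s n.+1 by case: (projT2 (next n.+1) (s n).+1).
by exists s; split; first exact/incn_inj/leq_mono/(homo_ltn ltn_trans s_lt).
Qed.

Lemma distinct_representatives (T : countType) (A : T -> set nat) :
  (forall p, infinite_set (A p)) -> exists v : T -> nat, injective v /\ forall p, A p (v p).
Proof.
move=> A_inf; pose A' n a := forall p, pickle p = n -> A p a.
have [s [s_inj sA']] : exists s : nat -> nat, injective s /\ forall n, A' n (s n).
  apply: distinct_representatives_nat => n.
  case: (pselect (exists p : T, pickle p = n)) => [[p <-]|no_p].
    by apply: (sub_infinite_set _ (A_inf p)) => a Apa q /(pcan_inj pickleK) ->.
  by apply: (sub_infinite_set _ infinite_nat) => a _ p pn; case: no_p; exists p.
exists (s \o pickle); split => [|p]; first exact: inj_comp s_inj (pcan_inj pickleK).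
exact: sA'.
Qed.

Lemma distinct_representatives_image (T : countType) (D : T -> set nat)
    (g : T -> nat -> nat) :
  (forall p, infinite_set (D p)) -> (forall p, injective (g p)) ->
  exists d : T -> nat, (forall p, D p (d p)) /\ injective (fun p => g p (d p)).
Proof.
move=> D_inf g_inj.
have [v [v_inj vD]] : exists v : T -> nat, injective v /\ forall p, (g p @` D p) (v p).
  by apply: (@distinct_representatives _ (fun p => g p @` D p)) => p; exact: infinite_image.
have [d dP] : {d : T -> nat & forall p, D p (d p) /\ g p (d p) = v p}.
  apply: (@choice _ _ (fun p y => D p y /\ g p y = v p)) => p.
  by have [y Dy gy] := vD p; exists y.
exists d; split => [p|p q]; first by case: (dP p).
by rewrite (proj2 (dP p)) (proj2 (dP q)); exact: v_inj.
Qed.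

Section Support.
Variables (Y : EMsSet) (n : nat) (x : Y n) (k : 'I_n.+1) (B : set nat).
Hypotheses (B_coinf : coinfinite B) (x_supp : supported x k B).

Lemma act_incl_mulr (a w : Minj) : (forall z, B z -> w z = z) ->
  act (incl k (mmul a w)) x = act (incl k a) x.
Proof.
move=> wB; rewrite -[in RHS](x_supp wB) -act_mul.
by apply: act_ext => j z; rewrite /incl; case: eqP.
Qed.

Lemma act_incl_factor (a c : Minj) : (forall z, B z -> a z = c z) ->
  (forall z, ~ B z -> exists2 y, ~ B y & c y = a z) ->
  act (incl k a) x = act (incl k c) x.
Proof.
move=> acB ac_off.
have [pre preP] : {pre : nat -> nat & forall z, ~ B z -> ~ B (pre z) /\ c (pre z) = a z}.
  apply: (@choice _ _ (fun z y => ~ B z -> ~ B y /\ c y = a z)) => z.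
  case: (pselect (B z)) => [Bz|/ac_off[y nBy cy]]; [by exists z | by exists y].
have w_inj : injective (patch pre B id).
  apply: patch_inj => [y z _ _ //|y z /set_mem nBy /set_mem nBz e|y z By nBz yz].
    by apply: (@minj a); rewrite -(preP _ nBy).2 -(preP _ nBz).2 e.
  by apply: (preP _ nBz).1; rewrite -yz.
have -> : a = mmul c (MInj w_inj).
  apply: minj_ext => z /=; rewrite /patch; case: ifPn => [/set_mem/acB //|/negP nBz].
  by rewrite (preP z (nBz \o mem_set)).2.
by apply: act_incl_mulr => z Bz /=; rewrite patchT // mem_set.
Qed.

Lemma act_incl_agree (a b : Minj) : (forall z, B z -> a z = b z) ->
  act (incl k a) x = act (incl k b) x.
Proof.
move=> abB; have nB_inf := (coinfiniteP B).1 B_coinf.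
have aB_inf : infinite_set (~` (a @` B)).
  apply: (sub_infinite_set _ (infinite_image (@minj a) nB_inf)).
  by move=> _ [z nBz <-] [y By /(@minj a) yz]; apply: nBz; rewrite -yz.
have [g [gB g_inj g_surj]] := infinite_nat_bij nB_inf aB_inf.
(* [patch g B a] is a bijection of omega extending [a] on [B]. *)
have c_inj : injective (patch g B a).
  apply: patch_inj => [y z _ _|//|y z By nBz ayz]; first exact: (@minj a).
  by apply: (gB z nBz); exists y.
suff to_c (u : Minj) : (forall z, B z -> u z = a z) ->
    act (incl k u) x = act (incl k (MInj c_inj)) x.
  by rewrite (to_c a) // (to_c b) // => z /abB.
move=> uaB; apply: act_incl_factor => [z Bz|z nBz]; first by rewrite /= patchT ?mem_set ?uaB.
have [|y nBy gy] := g_surj (u z).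
  by move=> [y By]; rewrite -uaB // => /(@minj u) yz; apply: nBz; rewrite -yz.
by exists y => //=; rewrite patchC ?mem_set.
Qed.

Lemma act_slot_agree (u v : 'I_n.+1 -> Minj) :
  (forall j, j != k -> u j =1 v j) -> (forall z, B z -> u k z = v k z) ->
  act u x = act v x.
Proof.
move=> uv uvB; pose w (j : 'I_n.+1) := if j == k then mone else u j.
have split_k (t : 'I_n.+1 -> Minj) : (forall j, j != k -> t j =1 u j) ->
    act t x = act w (act (incl k (t k)) x).
  move=> tu; rewrite -act_mul; apply: act_ext => j z.
  by rewrite /w /incl; case: eqP => [->|/eqP /tu ->].
rewrite (split_k u) // (split_k v) => [|j /uv uvj z] //.
by rewrite (act_incl_agree uvB).
Qed.

End Support.

Lemma act_agree (Y : EMsSet) n (x : Y n) (u v : 'I_n.+1 -> Minj) :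
  (forall l, exists B, [/\ coinfinite B, supported x l B & forall z, B z -> u l z = v l z]) ->
  act u x = act v x.
Proof.
move=> uv; pose w j (l : 'I_n.+1) := if l < j then v l else u l.
suff act_w j : act u x = act (w j) x.
  by rewrite (act_w n.+1); apply: act_ext => l z; rewrite /w ltn_ord.
elim: j => [|j ->]; first by apply: act_ext => l z.
case: (ltnP j n.+1) => [jn|nj].
  have [B [B_coinf xB uvB]] := uv (Ordinal jn).
  apply: (act_slot_agree B_coinf xB) => [l lj z|z Bz]; last by rewrite /w ltnn ltnSn uvB.
  have /negPf lj' : (l : nat) != j by apply: contra lj => /eqP lj; apply/eqP/val_inj.
  by rewrite /w ltnS [l <= j]leq_eqVlt lj'.
apply: act_ext => l z; have lj := leq_trans (ltn_ord l) nj.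
by rewrite /w lj ltnW.
Qed.

Lemma act_fix (Y : EMsSet) n (x : Y n) (u : 'I_n.+1 -> Minj) :
  (forall l, exists B, [/\ coinfinite B, supported x l B & forall z, B z -> u l z = z]) ->
  act u x = x.
Proof. by move=> uB; rewrite -[RHS]act_one; apply: act_agree. Qed.

Lemma supported_act (Y : EMsSet) n (x : Y n) (k : 'I_n.+1) (B : set nat)
    (u : 'I_n.+1 -> Minj) :
  coinfinite B -> supported x k B -> supported (act u x) k (u k @` B).
Proof.
move=> B_coinf xB w wB; rewrite -act_mul.
apply: (act_slot_agree B_coinf xB) => [j /negPf jk z|z Bz] /=; first by rewrite /incl jk.
by rewrite /incl eqxx /= wB //; exists z.
Qed.

Lemma coinfinite_union_image r (F : Ninj r) (B : 'I_r -> set nat) :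
  (forall i, coinfinite (B i)) ->
  coinfinite (fun z => exists i, ((fun t => F (i, t)) @` B i) z).
Proof.
move=> B_coinf; apply/coinfiniteP; case: r F B B_coinf => [|r] F B B_coinf.
  by apply: (sub_infinite_set _ infinite_nat) => z _ [[]].
have := infinite_image (@restr_inj _ F ord0) ((coinfiniteP _).1 (B_coinf ord0)).
apply: sub_infinite_set => _ [t nBt <-] [i [s Bs /ninj[ei st]]].
by apply: nBt; rewrite -st -ei.
Qed.

Section Injections.
Variables (r m : nat).

Definition precomp (F : 'I_m.+1 -> Ninj r) (u : 'I_r -> 'I_m.+1 -> Minj) :
  'I_m.+1 -> Ninj r :=
  fun k => ncomp (F k) (fun i => u i k).

Lemma precomp_ext (F G : 'I_m.+1 -> Ninj r) (u v : 'I_r -> 'I_m.+1 -> Minj) :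
  (forall k i t, F k (i, u i k t) = G k (i, v i k t)) -> precomp F u = precomp G v.
Proof. by move=> FG; apply/funext => k; apply: ninj_ext => -[i t]; exact: FG. Qed.

Lemma thin_common_factor (F F' : 'I_m.+1 -> Ninj r) (B : 'I_m.+1 -> 'I_r -> set nat) :
  (forall k i, coinfinite (B k i)) -> (forall k i z, B k i z -> F k (i, z) = F' k (i, z)) ->
  exists (H : 'I_m.+1 -> Ninj r) (w w' u' : 'I_r -> 'I_m.+1 -> Minj),
  [/\ forall k i z, B k i z -> [/\ w i k z = z, w' i k z = z & u' i k z = z.*2],
      precomp H (fun _ _ => MInj double_inj) = precomp F w
    & precomp H u' = precomp F' w'].
Proof.
move=> B_coinf FF'.
(* Off [B], [w] and [w'] pick arguments at which all values of [F] and [F'] are distinct. *)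
pose g (p : 'I_m.+1 * 'I_r * bool * nat) z := (if p.1.2 then F' else F) p.1.1.1 (p.1.1.2, z).
have [d [dB d_inj]] := @distinct_representatives_image _ (fun p => ~` B p.1.1.1 p.1.1.2) g
  (fun p => (coinfiniteP _).1 (B_coinf _ _))
  (fun p => @restr_inj _ ((if p.1.2 then F' else F) p.1.1.1) p.1.1.2).
have e_inj k i b : injective (fun t => d (k, i, b, t)).
  by move=> s t dst; have [] : (k, i, b, s) = (k, i, b, t) by apply: d_inj; rewrite /= dst.
pose w b i k := MInj (@patch_id_inj (B k i) _ (e_inj k i b) (fun t => dB (k, i, b, t))).
pose e i k := MInj (e_inj k i true).
have disj k (p q : 'I_r * nat) :
    ncomp (F k) (fun i => w false i k) p <> ncomp (F' k) (fun i => e i k) q.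
  case: p q => [i s] [j t] /=; rewrite /patch; case: ifPn => [/set_mem Bs|_].
    rewrite FF' // => /ninj[ij st]; subst j; apply: (dB (k, i, true, t)).
    by rewrite /= -st.
  by move=> /(d_inj (k, i, false, s) (k, j, true, t)) [].
pose H k := NInj (interleave_inj (@ninj _ _) (@ninj _ _) (disj k)).
have u'_inj (A : set nat) : injective (patch (fun t => t.*2.+1) A double).
  apply: patch_inj => [s t _ _|s t _ _ []|s t _ _ /(congr1 odd)]; try exact: double_inj.
  by rewrite /= !odd_double.
pose u' i k := MInj (u'_inj (B k i)).
exists H, (w false), (w true), u'; split.
- by move=> k i z Bz; rewrite /= !patchT ?mem_set.
- by apply: precomp_ext => k i t /=; rewrite odd_double doubleK.
apply: precomp_ext => k i t /=; have [Bt|nBt] := boolP (t \in B k i).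
  rewrite (patchT _ double Bt) /= odd_double doubleK !(patchT _ id Bt).
  by rewrite FF' //; exact: set_mem.
have {}nBt : t \in ~` B k i by rewrite in_setC.
by rewrite (patchC _ double nBt) (patchC _ id nBt) /= odd_double uphalf_double.
Qed.

Definition glue (S : 'I_r -> set nat) (fresh : 'I_r * nat -> nat) : 'I_r * nat -> nat :=
  patch fresh (fun p => S p.1 p.2) snd.

Lemma glue_in S fresh i z : S i z -> glue S fresh (i, z) = z.
Proof. by move=> Siz; rewrite /glue patchT // mem_set. Qed.

Lemma glue_out S fresh i z : ~ S i z -> glue S fresh (i, z) = fresh (i, z).
Proof. by move=> nSiz; rewrite /glue patchC // mem_set. Qed.

Lemma glue_inj S fresh : (forall i j z, S i z -> S j z -> i = j) -> injective fresh ->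
  (forall p i, ~ S i (fresh p)) -> injective (glue S fresh).
Proof.
move=> S_disj fresh_inj fresh_S; apply: patch_inj.
- move=> [i z] [j t] /set_mem /= Siz /set_mem /= Sjt /= zt; subst t.
  by rewrite (S_disj _ _ _ Siz Sjt).
- by move=> p q _ _ /fresh_inj.
- by move=> [i z] q /= Siz _ zq; apply: (fresh_S q i); rewrite -zq.
Qed.

End Injections.

Section Quotient.
Variables (r : nat) (X : 'I_r -> EMsSet) (m : nat).
Local Notation elt := (forall i : 'I_r, X i m).
Local Notation Q := (@quotrel r X m).

Definition supp_family (x : elt) (B : 'I_m.+1 -> 'I_r -> set nat) :=
  forall k i, coinfinite (B k i) /\ supported (x i) k (B k i).

Definition box_family (y : elt) (S : 'I_m.+1 -> 'I_r -> set nat) :=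
  forall k, [/\ forall i j z, S k i z -> S k j z -> i = j,
    coinfinite (fun z => exists i, S k i z) & forall i, supported (y i) k (S k i)].

Lemma inboxP (y : elt) : inbox y <-> exists S, box_family y S.
Proof.
split=> [/choice[S SP]|[S yS] k].
  exists S => k; have [S_disj [S_coinf yS]] := SP k; split=> // i j z Si Sj.
  by case: (eqVneq i j) => // /eqP ij; case: (S_disj i j z ij Si Sj).
have [S_disj S_coinf yS'] := yS k; exists (S k).
by split=> [i j z ij Si Sj|]; [exact/ij/S_disj/Sj | split].
Qed.

Lemma box_family_supp (y : elt) S : box_family y S -> supp_family y S.
Proof.
move=> yS k i; have [_ S_coinf ySk] := yS k; split=> // N.
by have [a [Na nSa]] := S_coinf N; exists a; split=> // Sa; apply: nSa; exists i.
Qed.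

Lemma quotrel_trans a b c : Q a b -> Q b c -> Q a c.
Proof. exact: rst_trans. Qed.

Lemma quotrel_sym a b : Q a b -> Q b a.
Proof. exact: rst_sym. Qed.

Lemma quotrel_act (F : 'I_m.+1 -> Ninj r) (u : 'I_r -> 'I_m.+1 -> Minj) (x : elt) :
  Q (F, fun i => act (u i) (x i)) (precomp F u, x).
Proof. by apply: rst_step; exists F, u, x. Qed.

Lemma quotrel_precomp_fix (F : 'I_m.+1 -> Ninj r) (x : elt) B
    (w : 'I_r -> 'I_m.+1 -> Minj) :
  supp_family x B -> (forall k i z, B k i z -> w i k z = z) -> Q (F, x) (precomp F w, x).
Proof.
move=> xB wB; have wx : (fun i => act (w i) (x i)) = x.
  apply: functional_extensionality_dep => i; apply: act_fix => k.
  by have [B_coinf xBk] := xB k i; exists (B k i); split=> // z /wB.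
by rewrite -[in X in Q (_, X)]wx; exact: quotrel_act.
Qed.

Lemma quotrel_precomp_agree (H : 'I_m.+1 -> Ninj r) (x : elt) B
    (u u' : 'I_r -> 'I_m.+1 -> Minj) :
  supp_family x B -> (forall k i z, B k i z -> u i k z = u' i k z) ->
  Q (precomp H u, x) (precomp H u', x).
Proof.
move=> xB uu'; apply: quotrel_trans (quotrel_sym (quotrel_act H u x)) _.
have -> : (fun i => act (u i) (x i)) = (fun i => act (u' i) (x i)).
  apply: functional_extensionality_dep => i; apply: act_agree => k.
  by have [B_coinf xBk] := xB k i; exists (B k i); split=> // z /uu'.
exact: quotrel_act.
Qed.

Lemma quotrel_agree (F F' : 'I_m.+1 -> Ninj r) (x : elt) B : supp_family x B ->
  (forall k i z, B k i z -> F k (i, z) = F' k (i, z)) -> Q (F, x) (F', x).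
Proof.
move=> xB FF'; have B_coinf k i := (xB k i).1.
have [H [w [w' [u' [wB FH F'H]]]]] := thin_common_factor B_coinf FF'.
apply: (quotrel_trans (quotrel_precomp_fix F xB (w := w) _)); first by move=> k i z /wB[].
rewrite -FH; apply: (quotrel_trans (quotrel_precomp_agree H xB (u' := u') _)).
  by move=> k i z /wB[_ _ ->].
by rewrite F'H; apply/quotrel_sym/(quotrel_precomp_fix F' xB) => k i z /wB[].
Qed.

Lemma Phi_quotrel (a b : dom X m) : Q a b -> Phi a = Phi b.
Proof.
elim=> {a b} [a b [F [u [x [-> ->]]]]|//|a b _ -> //|a b c _ -> _ -> //].
apply: functional_extensionality_dep => i; rewrite /Phi /= -act_mul.
exact: act_ext.
Qed.

Lemma Phi_box_family (F : 'I_m.+1 -> Ninj r) (x : elt) B : supp_family x B ->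
  box_family (Phi ((F, x) : dom X m)) (fun k i => (fun z => F k (i, z)) @` B k i).
Proof.
move=> xB k; split=> [i j _ [s _ <-] [t _ /ninj[]] //||i].
  by apply: coinfinite_union_image => i; case: (xB k i).
by have [B_coinf xBk] := xB k i; exact: supported_act.
Qed.

Lemma quotrel_normalize (F K : 'I_m.+1 -> Ninj r) (x : elt) B : supp_family x B ->
  (forall k i z, B k i z -> K k (i, F k (i, z)) = F k (i, z)) ->
  Q (F, x) (K, Phi ((F, x) : dom X m)).
Proof.
move=> xB KF; pose KF' := precomp K (fun i k => restr (F k) i).
apply: (quotrel_trans (quotrel_agree (F' := KF') xB _)); first by move=> k i z /KF.
exact/quotrel_sym/quotrel_act.
Qed.

Lemma box_families_quotrel (y : elt) S S' : box_family y S -> box_family y S' ->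
  exists K K' : 'I_m.+1 -> Ninj r, [/\ forall k i z, S k i z -> K k (i, z) = z,
    forall k i z, S' k i z -> K' k (i, z) = z & Q (K, y) (K', y)].
Proof.
move=> yS yS'; pose T (b : bool) := if b then S' else S.
have [v [v_inj v_fresh]] : exists v : 'I_m.+1 * bool * ('I_r * nat) -> nat,
    injective v /\ forall p, ~ exists i, T p.1.2 p.1.1 i (v p).
  apply: (@distinct_representatives _
    (fun p => ~` (fun z => exists i, T p.1.2 p.1.1 i z))).
  by move=> [[k []] p]; apply/coinfiniteP; [case: (yS' k) | case: (yS k)].
have T_disj b k i j z : T b k i z -> T b k j z -> i = j.
  by case: b; [case: (yS' k) => + _ _ | case: (yS k) => + _ _]; apply.
have K_inj b k : injective (glue (T b k) (fun p => v (k, b, p))).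
  apply: glue_inj => [|p q /v_inj[]//|p i Ti]; first exact: T_disj.
  by apply: (v_fresh (k, b, p)); exists i.
pose mix k p := v (k, `[< S k p.1 p.2 >], p).
have M_inj k : injective (glue (fun i z => S k i z /\ S' k i z) (mix k)).
  apply: glue_inj => [i j z [Si _] [Sj _]|p q /v_inj[_ /= ->]//|p i [Si S'i]].
    exact: (T_disj false k _ _ _ Si Sj).
  apply: (v_fresh (k, `[< S k p.1 p.2 >], p)); exists i; move: Si S'i; rewrite /mix.
  by case: (`[< _ >]) => Si S'i.
(* [M] is the identity where [S] and [S'] meet; it agrees with [K false] on [S'] and
   with [K true] on [S]. *)
pose K b k := NInj (K_inj b k); pose M k := NInj (M_inj k).
exists (K false), (K true); split=> [k i z|k i z|]; try exact: glue_in.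
apply: (quotrel_trans (quotrel_agree (F' := M) (box_family_supp yS') _)) => [k i z S'z|].
  have [Sz|nSz] := pselect (S k i z); first by rewrite /= !glue_in.
  by rewrite /= !glue_out /mix ?asboolF // => -[].
apply: (quotrel_agree (box_family_supp yS)) => k i z Sz.
have [S'z|nS'z] := pselect (S' k i z); first by rewrite /= !glue_in.
by rewrite /= !glue_out /mix ?asboolT // => -[].
Qed.

Hypothesis X_mild : forall i, mild (X i).

Lemma mild_supp_family (x : elt) : exists B, supp_family x B.
Proof.
have [B BP] := choice (fun p : 'I_m.+1 * 'I_r => @X_mild p.2 m (x p.2) p.1).
by exists (fun k i => B (k, i)) => k i; exact: BP (k, i).
Qed.

Lemma Phi_inbox (a : dom X m) : inbox (Phi a).
Proof.
case: a => F x; have [B xB] := mild_supp_family x.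
by apply/inboxP; eexists; exact: Phi_box_family.
Qed.

Lemma inbox_Phi_surj (y : elt) : inbox y -> exists a : dom X m, Phi a = y.
Proof.
move=> /inboxP[S yS].
have [v [v_inj v_fresh]] : exists v : 'I_m.+1 * ('I_r * nat) -> nat,
    injective v /\ forall p, ~ exists i, S p.1 i (v p).
  apply: (@distinct_representatives _ (fun p => ~` (fun z => exists i, S p.1 i z))).
  by move=> [k p]; apply/coinfiniteP; case: (yS k).
have F_inj k : injective (glue (S k) (fun p => v (k, p))).
  apply: glue_inj => [|p q /v_inj[]//|p i Si]; first by case: (yS k).
  by apply: (v_fresh (k, p)); exists i.
exists ((fun k => NInj (F_inj k)), y); apply: functional_extensionality_dep => i.
apply: act_fix => k; have [S_coinf ySk] := box_family_supp yS k i.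
by exists (S k i); split=> // z Sz; exact: glue_in.
Qed.

Lemma Phi_inj_quotrel (a b : dom X m) : Phi a = Phi b -> Q a b.
Proof.
case: a b => [F x] [F' x'] Phi_eq.
have [B xB] := mild_supp_family x; have [B' xB'] := mild_supp_family x'.
have yS := Phi_box_family F xB; have := Phi_box_family F' xB'; rewrite -Phi_eq => yS'.
have [K [K' [KS K'S' KK']]] := box_families_quotrel yS yS'.
apply: (quotrel_trans (quotrel_normalize (K := K) xB _)) => [k i z Bz|].
  by apply: KS; exists z.
apply: (quotrel_trans KK'); rewrite Phi_eq.
by apply/quotrel_sym/(quotrel_normalize xB') => k i z Bz; apply: K'S'; exists z.
Qed.

End Quotient.

Theorem theorem2p25 (r : nat) (X : 'I_r -> EMsSet) :
  (forall i, mild (X i)) ->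
  forall m : nat,
    (forall a : dom X m, inbox (Phi a)) /\
    (forall y : (forall i : 'I_r, X i m), inbox y -> exists a : dom X m, Phi a = y) /\
    (forall a b : dom X m, Phi a = Phi b <-> quotrel a b).
Proof.
move=> X_mild m; split; [|split].
- exact: Phi_inbox.
- exact: inbox_Phi_surj.
- by move=> a b; split; [exact: Phi_inj_quotrel | exact: Phi_quotrel].
Qed.
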